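(* Let $P$ be a linear process. If $P \to P'$, then there is a name $a$ such that $a\notin\mathcal{N}(P')$, $\mathcal{N}(P')\cup\{a\} = \mathcal{N}(P)$, and $\mathrm{sync}(a,P)$ holds.
   Context: Processes: $P ::= \mathbf{0} \mid \alpha.P \mid P\,|\,Q$ where $\alpha$ is a name $a$ or a co-name $\bar a$ (with $\bar{\bar a}=a$). Structural congruence $\equiv$ is the smallest congruence with $P|\mathbf{0}\equiv P$, $P|Q\equiv Q|P$, $P|(Q|R)\equiv(P|Q)|R$. Reduction $\to$ is the smallest relation with $a.P\,|\,\bar a.Q\to P\,|\,Q$, closed under parallel contexts ($P\to P'$ implies $P|R\to P'|R$ and $R|P\to R|P'$) and under $\equiv$. A process is linear if each name occurs at most once as an input $a$ and at most once as an output $\bar a$. $\mathcal{N}(P)$ is the set of names occurring in $P$ (as $a$ or $\bar a$): $\mathcal{N}(\mathbf{0})=\emptyset$, $\mathcal{N}(a.P)=\mathcal{N}(\bar a.P)=\{a\}\cup\mathcal{N}(P)$, $\mathcal{N}(P|Q)=\mathcal{N}(P)\cup\mathcal{N}(Q)$. $\mathrm{sync}(a,P)$ holds iff there exist $P_1,P_2,P_3,P_4$ with $P\equiv P_1\,|\,a.P_2$ and $P\equiv P_3\,|\,\bar a.P_4$. *)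

(* Names are natural numbers. *)
From Stdlib Require Import Arith.

Inductive proc : Type :=
| Nil : proc
| In : nat -> proc -> proc
| Out : nat -> proc -> proc
| Par : proc -> proc -> proc.

Inductive scong : proc -> proc -> Prop :=
| sc_refl : forall P, scong P P
| sc_sym : forall P Q, scong P Q -> scong Q P
| sc_trans : forall P Q R, scong P Q -> scong Q R -> scong P R
| sc_in : forall a P Q, scong P Q -> scong (In a P) (In a Q)
| sc_out : forall a P Q, scong P Q -> scong (Out a P) (Out a Q)
| sc_par : forall P P' Q Q', scong P P' -> scong Q Q' -> scong (Par P Q) (Par P' Q')
| sc_nil : forall P, scong (Par P Nil) P
| sc_comm : forall P Q, scong (Par P Q) (Par Q P)
| sc_assoc : forall P Q R, scong (Par P (Par Q R)) (Par (Par P Q) R).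

Inductive red : proc -> proc -> Prop :=
| red_comm : forall a P Q, red (Par (In a P) (Out a Q)) (Par P Q)
| red_parl : forall P P' R, red P P' -> red (Par P R) (Par P' R)
| red_parr : forall P P' R, red P P' -> red (Par R P) (Par R P')
| red_struct : forall P P1 Q1 Q, scong P P1 -> red P1 Q1 -> scong Q1 Q -> red P Q.

Fixpoint n_in (a : nat) (P : proc) : nat :=
  match P with
  | Nil => 0
  | In b Q => (if Nat.eqb a b then 1 else 0) + n_in a Q
  | Out _ Q => n_in a Q
  | Par Q R => n_in a Q + n_in a R
  end.

Fixpoint n_out (a : nat) (P : proc) : nat :=
  match P with
  | Nil => 0
  | In _ Q => n_out a Q
  | Out b Q => (if Nat.eqb a b then 1 else 0) + n_out a Q
  | Par Q R => n_out a Q + n_out a R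
  end.

Definition linear (P : proc) : Prop :=
  forall a, n_in a P <= 1 /\ n_out a P <= 1.

(* Membership in the set of names N(P). *)
Fixpoint inN (a : nat) (P : proc) : Prop :=
  match P with
  | Nil => False
  | In b Q => a = b \/ inN a Q
  | Out b Q => a = b \/ inN a Q
  | Par Q R => inN a Q \/ inN a R
  end.

Definition sync (a : nat) (P : proc) : Prop :=
  exists P1 P2 P3 P4,
    scong P (Par P1 (In a P2)) /\ scong P (Par P3 (Out a P4)).

(** A reduction consumes exactly one input prefix [a] and one output prefix
    [abar] on a single name [a], leaving all other prefix counts unchanged,
    and the redex shows that [a] synchronises in [P]. In a linear process [a]
    occurs once as input and once as output, so after the step it no longer
    occurs, while every other name occurs in [P'] exactly when it occurs in
    [P]. *)

From Stdlib Require Import Arith Lia.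

Lemma scong_counts P Q :
  scong P Q -> forall a, n_in a P = n_in a Q /\ n_out a P = n_out a Q.
Proof.
  induction 1; intro c; simpl; try (split; lia).
  - destruct (IHscong c); split; lia.
  - destruct (IHscong1 c), (IHscong2 c); split; lia.
  - destruct (IHscong c); split; lia.
  - destruct (IHscong c); split; lia.
  - destruct (IHscong1 c), (IHscong2 c); split; lia.
Qed.

Lemma inN_counts x P : inN x P <-> n_in x P + n_out x P <> 0.
Proof.
  induction P; simpl.
  - lia.
  - destruct (Nat.eqb_spec x n); simpl; [split; [lia | auto] |]. rewrite IHP. lia.
  - destruct (Nat.eqb_spec x n); simpl; [split; [lia | auto] |]. rewrite IHP. lia.
  - rewrite IHP1, IHP2. lia.
Qed.

Lemma scong_par_swap_right P Q R : scong (Par (Par P Q) R) (Par (Par P R) Q).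
Proof.
  eapply sc_trans; [apply sc_sym, sc_assoc |].
  eapply sc_trans; [apply sc_par; [apply sc_refl | apply sc_comm] |].
  apply sc_assoc.
Qed.

Lemma sync_scong a P Q : scong P Q -> sync a Q -> sync a P.
Proof.
  intros H (P1 & P2 & P3 & P4 & H1 & H2).
  exists P1, P2, P3, P4. split; eapply sc_trans; eauto.
Qed.

Lemma sync_parl a P R : sync a P -> sync a (Par P R).
Proof.
  intros (P1 & P2 & P3 & P4 & H1 & H2).
  exists (Par P1 R), P2, (Par P3 R), P4.
  split.
  - eapply sc_trans; [apply sc_par; [exact H1 | apply sc_refl] | apply scong_par_swap_right].
  - eapply sc_trans; [apply sc_par; [exact H2 | apply sc_refl] | apply scong_par_swap_right].
Qed.

Lemma sync_parr a P R : sync a P -> sync a (Par R P).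
Proof. intro H. eapply sync_scong; [apply sc_comm | exact (sync_parl _ _ R H)]. Qed.

Lemma sync_redex a P Q : sync a (Par (In a P) (Out a Q)).
Proof. exists (Out a Q), P, (In a P), Q. split; [apply sc_comm | apply sc_refl]. Qed.

Definition consumes_pair (a : nat) (P P' : proc) : Prop :=
  n_in a P = S (n_in a P') /\ n_out a P = S (n_out a P') /\
  forall b, b <> a -> n_in b P = n_in b P' /\ n_out b P = n_out b P'.

Lemma consumes_pair_par_l a P P' R :
  consumes_pair a P P' -> consumes_pair a (Par P R) (Par P' R).
Proof.
  intros (Hi & Ho & Hb). unfold consumes_pair; simpl. split; [lia | split; [lia |]].
  intros b Hba. destruct (Hb b Hba). lia.
Qed.

Lemma consumes_pair_par_r a P P' R :
  consumes_pair a P P' -> consumes_pair a (Par R P) (Par R P').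
Proof.
  intros (Hi & Ho & Hb). unfold consumes_pair; simpl. split; [lia | split; [lia |]].
  intros b Hba. destruct (Hb b Hba). lia.
Qed.

Lemma consumes_pair_scong a P P1 Q1 Q :
  scong P P1 -> scong Q1 Q -> consumes_pair a P1 Q1 -> consumes_pair a P Q.
Proof.
  intros HP HQ (Hi & Ho & Hb).
  pose proof (scong_counts _ _ HP) as CP. pose proof (scong_counts _ _ HQ) as CQ.
  destruct (CP a), (CQ a). unfold consumes_pair. split; [lia | split; [lia |]].
  intros b Hba. destruct (Hb b Hba), (CP b), (CQ b). lia.
Qed.

Lemma red_consumes_pair P P' :
  red P P' -> exists a, consumes_pair a P P' /\ sync a P.
Proof.
  induction 1 as [a P Q | P P' R _ [a [Hc Hs]] | P P' R _ [a [Hc Hs]]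
                 | P P1 Q1 Q HP _ [a [Hc Hs]] HQ]; exists a.
  - split; [| apply sync_redex].
    unfold consumes_pair; simpl. rewrite Nat.eqb_refl. split; [lia | split; [lia |]].
    intros b Hba. apply Nat.eqb_neq in Hba. rewrite Hba. simpl. lia.
  - split; [apply consumes_pair_par_l | apply sync_parl]; assumption.
  - split; [apply consumes_pair_par_r | apply sync_parr]; assumption.
  - split; [eapply consumes_pair_scong | eapply sync_scong]; eassumption.
Qed.

Theorem lemma1 (P P' : proc) :
  linear P -> red P P' ->
  exists a : nat,
    ~ inN a P' /\
    (forall x : nat, (inN x P' \/ x = a) <-> inN x P) /\
    sync a P.
Proof.
  intros Hlin Hred.
  destruct (red_consumes_pair _ _ Hred) as (a & (Hi & Ho & Hb) & Hsync).
  destruct (Hlin a) as [Hin1 Hout1].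
  exists a. split; [| split; [| exact Hsync]].
  - rewrite inN_counts. lia.
  - intro x. rewrite !inN_counts. destruct (Nat.eq_dec x a) as [-> | Hxa].
    + lia.
    + destruct (Hb x Hxa). lia.
Qed.
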